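(* Let $[a,b]\subset[0,1]$, $c\in(0,1]$, $K=\{u\in\mathcal C([0,1]): u\ge 0,\ \min_{t\in[a,b]}u(t)\ge c\|u\|\}$ with the supremum norm $\|\cdot\|$. Assume: (H1) $f:[0,1]\times[0,\infty)\to[0,\infty)$ is such that $f(\cdot,u(\cdot))$ is measurable whenever $u\in\mathcal C([0,1])$, and for each $r>0$ there is $R>0$ with $f(t,u)\le R$ for a.a. $t\in[0,1]$ and all $u\in[0,r]$; (H2) $g$ is measurable and $g\ge 0$ a.e.; (H3) $k:[0,1]\times[0,1]\to[0,\infty)$ is continuous; (H4) there is a measurable $\Phi:[0,1]\to[0,\infty)$ with $\Phi g\in L^1(0,1)$, $\int_a^b\Phi g>0$, $k(t,s)\le\Phi(s)$ for all $t,s\in[0,1]$ and $c\Phi(s)\le k(t,s)$ for $t\in[a,b]$, $s\in[0,1]$. Let $T:K\to K$, $Tu(t)=\int_0^1k(t,s)g(s)f(s,u(s))\,ds$, and let $\mathbb T$ be its closed--convex envelope. Suppose that $\{u\}\cap\mathbb{T}u\subset\{Tu\}$ for all $u\in K\cap\mathbb{T}K$, and that there exist $\rho>0$ and $\varepsilon>0$ such that $f^{\rho,\varepsilon}<m$, where $$f^{\rho,\varepsilon}:=\sup_{0\le t\le1,\,0\le u\le\rho+\varepsilon}\frac{f(t,u)}{\rho},\qquad \frac1m:=\sup_{t\in[0,1]}\int_0^1k(t,s)g(s)\,ds.$$ Then $\lambda u\notin\mathbb{T}u$ for all $u\in K$ with $\|u\|=\rho$ and all $\lambda\ge1$.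
   Context: The closed--convex envelope of $T:K\to K$ is the multivalued map $\mathbb{T}u=\bigcap_{\varepsilon>0}\overline{\mathrm{co}}\,T\big(\overline B_\varepsilon(u)\cap K\big)$, where $\overline B_\varepsilon(u)$ is the closed ball in $\mathcal C([0,1])$ and $\overline{\mathrm{co}}$ is closed convex hull; $\mathbb TK=\bigcup_{u\in K}\mathbb Tu$. *)

From HB Require Import structures.
From mathcomp Require Import all_boot all_order all_algebra.
From mathcomp Require Import all_classical all_reals all_analysis.
Set Implicit Arguments. Unset Strict Implicit. Unset Printing Implicit Defensive.
Import Order.TTheory GRing.Theory Num.Theory.
Import numFieldNormedType.Exports.
Local Open Scope classical_set_scope.
Local Open Scope ring_scope.

(* Elements of C([0,1]) are represented by functions R -> R that are
   continuous on [0,1]; only their values on [0,1] matter (all notions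
   below depend only on these values). *)
Section Defs.
Variable R : realType.

Definition C01 (u : R -> R) : Prop := {within `[0, 1], continuous u}.

Definition supn (u : R -> R) : R := sup [set `|u t| | t in `[0, 1]].

Definition coneK (a b c : R) (u : R -> R) : Prop :=
  C01 u /\ (forall t, 0 <= t <= 1 -> 0 <= u t) /\
  (forall t, a <= t <= b -> c * supn u <= u t).

Definition clco (A : set (R -> R)) (v : R -> R) : Prop :=
  C01 v /\
  forall d : R, 0 < d -> exists (n : nat) (l : 'I_n -> R) (x : 'I_n -> R -> R),
    [/\ (forall i, 0 <= l i), \sum_(i < n) l i = 1, (forall i, A (x i)) &
        forall t, 0 <= t <= 1 -> `|v t - \sum_(i < n) l i * x i t| <= d].

(* closed-convex envelope of T : K -> K :  v \in TT u *)
Definition envelope (K : set (R -> R)) (T : (R -> R) -> (R -> R))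
    (u v : R -> R) : Prop :=
  forall e : R, 0 < e ->
    clco [set T w | w in [set w | K w /\ supn (fun t => w t - u t) <= e]] v.

Definition Top (k : R -> R -> R) (g : R -> R) (f : R -> R -> R)
    (u : R -> R) : R -> R :=
  fun t => Rintegral (@lebesgue_measure R) `[0, 1]
             (fun s => k t s * g s * f s (u s)).

Definition fsup (f : R -> R -> R) (rho eps : R) : \bar R :=
  ereal_sup [set x | exists t u : R, [/\ 0 <= t <= 1, 0 <= u <= rho + eps &
                                   x = (f t u / rho)%:E]].

Definition inv_m (k : R -> R -> R) (g : R -> R) : \bar R :=
  ereal_sup [set x | exists t : R, 0 <= t <= 1 /\
     x = (\int[@lebesgue_measure R]_(s in `[0%R, 1%R]) (k t s * g s)%:E)%E].

Definition mconst (k : R -> R -> R) (g : R -> R) : R := (fine (inv_m k g))^-1.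

End Defs.

From HB Require Import structures.
From mathcomp Require Import all_boot all_order all_algebra.
From mathcomp Require Import all_classical all_reals all_analysis.
From mathcomp Require Import measurable_realfun.

(* If w is in K and within eps of u, then 0 <= w <= rho + eps on [0,1], so
   f(s, w s) <= rho f^{rho,eps} and Tw <= rho f^{rho,eps} / m < rho.  This
   pointwise bound survives convex combinations and uniform limits, hence bounds
   every element of TT u; but lam u >= u and sup u = rho. *)

Set Implicit Arguments.
Unset Strict Implicit.
Unset Printing Implicit Defensive.
Import Order.TTheory GRing.Theory Num.Theory.
Import numFieldNormedType.Exports.
Local Open Scope classical_set_scope.
Local Open Scope ring_scope.

Lemma C01B (R : realType) (u v : R -> R) :
  C01 u -> C01 v -> C01 (fun t => u t - v t).
Proof. by move=> uc vc x; apply: cvgB; [exact: uc | exact: vc]. Qed.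

Lemma normr_le_supn (R : realType) (u : R -> R) s :
  C01 u -> 0 <= s <= 1 -> `|u s| <= supn u.
Proof.
move=> uc s01; have [m _ le_m] := EVT_max ler01 (fun x => cvg_norm (uc x)).
apply: sup_upper_bound; last by exists s => //=; rewrite in_itv.
split; first by exists `|u 0|, 0 => //=; rewrite in_itv /= lexx ler01.
by exists `|u m| => _ [t /= t01 <-]; exact: le_m.
Qed.

Lemma supn_le (R : realType) (u : R -> R) B :
  (forall t, 0 <= t <= 1 -> `|u t| <= B) -> supn u <= B.
Proof.
move=> le_B; apply: ge_sup; first by exists `|u 0|, 0 => //=; rewrite in_itv /= lexx ler01.
by move=> _ [t /= t01 <-]; apply: le_B; move: t01; rewrite in_itv.
Qed.

Lemma clco_le (R : realType) (A : set (R -> R)) (v : R -> R) B :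
  (forall x, A x -> forall t, 0 <= t <= 1 -> x t <= B) ->
  clco A v -> forall t, 0 <= t <= 1 -> v t <= B.
Proof.
move=> le_B [_ approx] t t01; apply/ler_addgt0Pr => d d_gt0.
have [n [l [x [l_ge0 l_sum1 Ax /(_ t t01)]]]] := approx d d_gt0.
rewrite ler_distl => /andP[_ v_le].
apply: le_trans v_le _; rewrite lerD2r.
rewrite -[leRHS]mul1r -l_sum1 mulr_suml; apply: ler_sum => i _.
by rewrite ler_wpM2l ?le_B.
Qed.

Lemma fsup_ge (R : realType) (f : R -> R -> R) rho eps t x :
  0 <= t <= 1 -> 0 <= x <= rho + eps -> ((f t x / rho)%:E <= fsup f rho eps)%E.
Proof. by move=> t01 x_le; apply: ereal_sup_ubound; exists t, x. Qed.

Lemma inv_m_ge (R : realType) (k : R -> R -> R) (g : R -> R) t : 0 <= t <= 1 ->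
  (\int[@lebesgue_measure R]_(s in `[0%R, 1%R]) (k t s * g s)%:E <= inv_m k g)%E.
Proof. by move=> t01; apply: ereal_sup_ubound; exists t. Qed.

Lemma ge0_lt_inv_fine (R : realFieldType) (x y : \bar R) :
  (0 <= x)%E -> (x < (fine y)^-1%:E)%E ->
  exists F M : R, [/\ x = F%:E, y = M%:E, 0 < M & F * M < 1].
Proof.
case: x => [F | |] //; rewrite lee_fin lte_fin => F_ge0 F_lt.
have M_gt0 : 0 < fine y by rewrite -invr_gt0 (le_lt_trans F_ge0).
case: y M_gt0 F_lt => [M | |] /= M_gt0 F_lt; try by rewrite ltxx in M_gt0.
by exists F, M; split => //; rewrite -(mulVf (lt0r_neq0 M_gt0)) ltr_pM2r.
Qed.

Lemma measurable_fun_section (R : realType) (D : set R) (k : R -> R -> R) t :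
  measurable D -> {within D `*` D, continuous (fun p : R * R => k p.1 p.2)} ->
  D t -> measurable_fun D (k t).
Proof.
move=> mD /continuous_subspace_prodP kc Dt.
apply: subspace_continuous_measurable_fun => //.
rewrite continuous_subspace_in => s /set_mem Ds.
have pair_t : {for s, continuous (fun s' : subspace D =>
    ((t : subspace D), s') : subspace D * subspace D)}.
  by apply: cvg_pair => //; exact: cvg_cst.
exact: cvg_comp pair_t (kc (t, s) (mem_set (conj Dt Ds : (D `*` D) (t, s)))).
Qed.

Section integral_operator_bound.
Context (R : realType) (k : R -> R -> R) (g : R -> R) (f : R -> R -> R).
Hypotheses (f_ge0 : forall t u, 0 <= t <= 1 -> 0 <= u -> 0 <= f t u)
  (f_meas : forall u : R -> R, C01 u -> (forall t, 0 <= t <= 1 -> 0 <= u t) ->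
     measurable_fun (`[0, 1] : set R) (fun t => f t (u t)))
  (g_meas : measurable_fun (`[0, 1] : set R) g)
  (g_ae_ge0 : {ae @lebesgue_measure R, forall t, 0 <= t <= 1 -> 0 <= g t})
  (k_ge0 : forall t s, 0 <= t <= 1 -> 0 <= s <= 1 -> 0 <= k t s)
  (k_cont : {within `[0, 1] `*` `[0, 1], continuous (fun p : R * R => k p.1 p.2)}).

Local Notation mu := (@lebesgue_measure R).
Let I : set R := `[0, 1].
(* g is only a.e. nonnegative: replacing it by its positive part changes no
   integral and makes the integrands nonnegative, as monotonicity requires. *)
Let gp s := Num.max (g s) 0.

Let mI : measurable I. Proof. exact: measurable_itv. Qed.

Let I01 s : I s -> 0 <= s <= 1. Proof. by rewrite /I /= in_itv. Qed.

Let gp_meas : measurable_fun I gp.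
Proof. by apply: measurable_maxr => //; exact: measurable_cst. Qed.

Let gp_ge0 s : 0 <= gp s. Proof. by rewrite le_max lexx orbT. Qed.

Let integral_g_gp (F : R -> R -> \bar R) :
  measurable_fun I (fun s => F s (g s)) -> measurable_fun I (fun s => F s (gp s)) ->
  (\int[mu]_(s in I) F s (g s) = \int[mu]_(s in I) F s (gp s))%E.
Proof.
move=> Fg_meas Fgp_meas; apply: ae_eq_integral => //.
case: g_ae_ge0 => N [mN N0 gN]; exists N; split => // s /= Fs; apply: gN => g0.
by apply: Fs => /I01 s01; rewrite /gp max_l ?g0.
Qed.

Lemma Top_le w t P M : C01 w -> (forall s, 0 <= s <= 1 -> 0 <= w s) ->
  0 <= P -> 0 <= t <= 1 -> (forall s, 0 <= s <= 1 -> f s (w s) <= P) ->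
  (\int[mu]_(s in `[0%R, 1%R]) (k t s * g s)%:E <= M%:E)%E ->
  Top k g f w t <= P * M.
Proof.
move=> wc w0 P0 t01 fP kgM.
have kt_meas := @measurable_fun_section R I k t mI k_cont t01.
have fw_meas := f_meas wc w0.
have kgpf_ge0 s : I s -> 0 <= k t s * gp s * f s (w s).
  by move=> /I01 s01; rewrite !mulr_ge0 ?k_ge0 ?f_ge0 ?w0.
have kgfE : (\int[mu]_(s in I) (k t s * g s * f s (w s))%:E =
             \int[mu]_(s in I) (k t s * gp s * f s (w s))%:E)%E.
  by apply: (@integral_g_gp (fun s x => (k t s * x * f s (w s))%:E));
    apply/measurable_EFinP; do 2 apply: measurable_funM => //.
have kgE : (\int[mu]_(s in I) (k t s * g s)%:E = \int[mu]_(s in I) (k t s * gp s)%:E)%E.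
  by apply: (@integral_g_gp (fun s x => (k t s * x)%:E));
    apply/measurable_EFinP; apply: measurable_funM.
have kgpf_le : (\int[mu]_(s in I) (k t s * gp s * f s (w s))%:E <= (P * M)%:E)%E.
  apply: (@le_trans _ _ (\int[mu]_(s in I) (P%:E * (k t s * gp s)%:E))%E).
    apply: ge0_le_integral => //.
    - by apply/measurable_EFinP; do 2 apply: measurable_funM => //.
    - apply: emeasurable_funM; first exact: measurable_cst.
      by apply/measurable_EFinP; apply: measurable_funM.
    move=> s Is; rewrite -EFinM lee_fin mulrC ler_wpM2r ?fP ?I01 //.
    by rewrite mulr_ge0 ?k_ge0 ?I01.
  rewrite ge0_integralZl_EFin //.
  - by rewrite EFinM -kgE lee_wpmul2l.
  - by move=> s s01; rewrite lee_fin mulr_ge0 ?k_ge0.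
  - by apply/measurable_EFinP; apply: measurable_funM.
have kgpf_int_ge0 : (0 <= \int[mu]_(s in I) (k t s * gp s * f s (w s))%:E)%E.
  by apply: integral_ge0 => s Is; rewrite lee_fin kgpf_ge0.
have -> : Top k g f w t = fine (\int[mu]_(s in I) (k t s * g s * f s (w s))%:E) by [].
rewrite kgfE; move: kgpf_int_ge0 kgpf_le.
by case: (\int[mu]_(s in I) _)%E.
Qed.

End integral_operator_bound.

Theorem lemma2 (R : realType) (a b c rho eps : R)
  (f : R -> R -> R) (g Phi : R -> R) (k : R -> R -> R) :
  0 <= a -> a <= b -> b <= 1 -> 0 < c -> c <= 1 ->
  (* (H1) *)
  (forall t u, 0 <= t <= 1 -> 0 <= u -> 0 <= f t u) ->
  (forall u : R -> R, C01 u -> (forall t, 0 <= t <= 1 -> 0 <= u t) ->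
     measurable_fun (`[0, 1] : set R) (fun t => f t (u t))) ->
  (forall r : R, 0 < r -> exists Rb : R, 0 < Rb /\
     {ae @lebesgue_measure R, forall t, 0 <= t <= 1 ->
        forall u, 0 <= u <= r -> f t u <= Rb}) ->
  (* (H2) *)
  measurable_fun (`[0, 1] : set R) g ->
  {ae @lebesgue_measure R, forall t, 0 <= t <= 1 -> 0 <= g t} ->
  (* (H3) *)
  (forall t s, 0 <= t <= 1 -> 0 <= s <= 1 -> 0 <= k t s) ->
  {within `[0, 1] `*` `[0, 1], continuous (fun p : R * R => k p.1 p.2)} ->
  (* (H4) *)
  measurable_fun (`[0, 1] : set R) Phi ->
  (forall s, 0 <= s <= 1 -> 0 <= Phi s) ->
  (@lebesgue_measure R).-integrable `[0, 1] (fun s => (Phi s * g s)%:E) ->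
  (0 < \int[@lebesgue_measure R]_(s in `[a, b]) (Phi s * g s)%:E)%E ->
  (forall t s, 0 <= t <= 1 -> 0 <= s <= 1 -> k t s <= Phi s) ->
  (forall t s, a <= t <= b -> 0 <= s <= 1 -> c * Phi s <= k t s) ->
  (* {u} cap TT u subset {T u} for all u in K cap TT K *)
  (forall u : R -> R, coneK a b c u ->
     (exists w, coneK a b c w /\ envelope (coneK a b c) (Top k g f) w u) ->
     envelope (coneK a b c) (Top k g f) u u ->
     forall t, 0 <= t <= 1 -> u t = Top k g f u t) ->
  0 < rho -> 0 < eps ->
  (fsup f rho eps < (mconst k g)%:E)%E ->
  forall u : R -> R, coneK a b c u -> supn u = rho ->
  forall lam : R, 1 <= lam ->
    ~ envelope (coneK a b c) (Top k g f) u (fun t => lam * u t).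
Proof.
move=> _ _ _ _ _ f_ge0 f_meas _ g_meas g_ae_ge0 k_ge0 k_cont _ _ _ _ _ _ _
  rho_gt0 eps_gt0 fsup_lt u [uc [u_ge0 _]] supn_u lam lam_ge1 env.
have fsup_ge0 : (0 <= fsup f rho eps)%E.
  apply: le_trans (@fsup_ge R f rho eps 0 0 _ _); rewrite ?lexx ?ler01 //.
    by rewrite lee_fin divr_ge0 ?f_ge0 ?lexx ?ler01 ?ltW.
  by rewrite addr_ge0 ?ltW.
have [F [M [fsupE inv_mE M_gt0 FM_lt1]]] := ge0_lt_inv_fine fsup_ge0 fsup_lt.
have u_le_rho t : 0 <= t <= 1 -> u t <= rho.
  by move=> t01; rewrite -supn_u (le_trans (ler_norm _)) ?normr_le_supn.
have Tw_le w : coneK a b c w -> supn (fun t => w t - u t) <= eps ->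
    forall t, 0 <= t <= 1 -> Top k g f w t <= rho * F * M.
  move=> [wc [w_ge0 _]] wu t t01; apply: Top_le => //.
  - by rewrite mulr_ge0 ?(ltW rho_gt0) // -lee_fin -fsupE.
  - move=> s s01; rewrite mulrC -ler_pdivrMr // -lee_fin -fsupE fsup_ge // w_ge0 //=.
    have := le_trans (normr_le_supn (C01B wc uc) s01) wu.
    by rewrite ler_distl => /andP[_ /le_trans->]; rewrite ?lerD2r ?u_le_rho.
  - by rewrite -inv_mE inv_m_ge.
have lamu_le : forall t, 0 <= t <= 1 -> lam * u t <= rho * F * M.
  by apply: (clco_le _ (env eps eps_gt0)) => _ [w [wK wu] <-]; exact: Tw_le.
have : supn u <= rho * F * M.
  apply: supn_le => t t01; rewrite ger0_norm ?u_ge0 // (le_trans _ (lamu_le t t01)) //.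
  by rewrite ler_peMl ?u_ge0.
by rewrite supn_u -mulrA ler_pMr // leNgt FM_lt1.
Qed.
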